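(* Let $G$ be a nontrivial finite subgroup of $\mathrm{SO}(3)$. Then there does not exist a continuous function $f:\mathrm{SO}(3)/G\to\mathrm{SO}(3)$ such that $p_G(f(\mathcal{R}))=\mathcal{R}$ for every $\mathcal{R}\in\mathrm{SO}(3)/G$.
   Context: $\mathrm{SO}(3)/G$ denotes the space of left cosets $RG$ ($R\in\mathrm{SO}(3)$) with the quotient topology, and $p_G:\mathrm{SO}(3)\to\mathrm{SO}(3)/G$, $R\mapsto RG$, is the quotient (covering) map. *)

From HB Require Import structures.
From mathcomp Require Import all_boot all_order all_algebra.
From mathcomp Require Import all_classical all_reals all_analysis.
Set Implicit Arguments. Unset Strict Implicit. Unset Printing Implicit Defensive.
Import Order.TTheory GRing.Theory Num.Theory.
Import numFieldNormedType.Exports.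
Local Open Scope classical_set_scope.
Local Open Scope ring_scope.

(* SO(3) is a subspace of 'M[R]_3 (with its
   canonical matrix topology); the quotient SO(3)/G is the set of left
   cosets R G, topologized by the quotient topology, written out explicitly. *)

Definition SO3 (R : realType) : set 'M[R]_3 :=
  [set M | M *m M^T = 1%:M /\ \det M = 1].

Definition rel_open (R : realType) (A X : set 'M[R]_3) : Prop :=
  exists U : set 'M[R]_3, open U /\ X = U `&` A.

Definition finite_subgroup_SO3 (R : realType) (G : set 'M[R]_3) : Prop :=
  [/\ finite_set G, G `<=` @SO3 R, G 1%:M,
      (forall g h, G g -> G h -> G (g *m h)) &
      (forall g, G g -> G (invmx g))].

Definition lcoset (R : realType) (G : set 'M[R]_3) (M : 'M[R]_3) : set 'M[R]_3 :=
  [set M *m g | g in G].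

Definition quot (R : realType) (G : set 'M[R]_3) : set (set 'M[R]_3) :=
  [set C | exists2 M, @SO3 R M & C = lcoset G M].

Definition quot_open (R : realType) (G : set 'M[R]_3) (W : set (set 'M[R]_3)) : Prop :=
  W `<=` quot G /\ rel_open (@SO3 R) [set M | @SO3 R M /\ W (lcoset G M)].

Definition quot_continuous (R : realType) (G : set 'M[R]_3)
  (f : set 'M[R]_3 -> 'M[R]_3) : Prop :=
  forall V, rel_open (@SO3 R) V -> quot_open G [set C | quot G C /\ V (f C)].

(* A continuous section s of p_G would make M |-> M^T s(M G) a continuous map
   from SO(3) to the finite group G.  As SO(3) is path-connected this map is
   constant, and comparing its values at 1 and at some h in G \ {1} (where
   hG = G) gives s(G) = h^T s(G), i.e. h = 1.
   Paths are built from Cayley transforms C(A) = (1 + A)(1 - A)^-1 of skew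
   matrices: t |-> C(tA) C(tB) joins 1 to C(A) C(B).  Every rotation M with
   1 + tr M <> 0 is such a transform, since det(M + 1) = 2 (1 + tr M), and
   every rotation is a product of two of them, the first factor being the
   identity or one of the six quarter turns about the coordinate axes. *)

From HB Require Import structures.
From mathcomp Require Import all_boot all_order all_algebra.
From mathcomp Require Import all_classical all_reals all_analysis.
From mathcomp Require Import ring lra.
Import Order.TTheory GRing.Theory Num.Theory.
Import numFieldNormedType.Exports.
Local Open Scope classical_set_scope.
Local Open Scope ring_scope.

Set Implicit Arguments. Unset Strict Implicit. Unset Printing Implicit Defensive.

Lemma trmx11 (R : pzRingType) (x : 'M[R]_1) : x^T = x.
Proof. by rewrite [x]mx11_scalar tr_scalar_mx. Qed.

Definition SO (R : comUnitRingType) (n : nat) : set 'M[R]_n :=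
  [set M | M *m M^T = 1%:M /\ \det M = 1].
Arguments SO {R} n.

Section SpecialOrthogonal.
Variables (R : comUnitRingType) (n : nat).
Implicit Types M N : 'M[R]_n.

Lemma SO1 : SO n (1%:M : 'M[R]_n).
Proof. by split; rewrite ?trmx1 ?mulmx1 ?det1. Qed.

Lemma SO_mul M N : SO n M -> SO n N -> SO n (M *m N).
Proof.
move=> [MMT dM] [NNT dN]; split; last by rewrite det_mulmx dM dN mulr1.
by rewrite trmx_mul mulmxA -(mulmxA M) NNT mulmx1.
Qed.

Lemma SO_tr M : SO n M -> SO n M^T.
Proof. by move=> [MMT dM]; split; [rewrite trmxK; exact: mulmx1C | rewrite det_tr]. Qed.

Lemma adj_SO M : SO n M -> \adj M = M^T.
Proof. by move=> [MMT dM]; rewrite -[\adj M]mulmx1 -MMT mulmxA mul_adj_mx dM mul1mx. Qed.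

End SpecialOrthogonal.

Definition cayley (R : comUnitRingType) n (A : 'M[R]_n) : 'M[R]_n :=
  (1%:M + A) *m invmx (1%:M - A).

Section Cayley.
Variables (R : realFieldType) (n : nat).
Implicit Types A M : 'M[R]_n.

Lemma unitmx_1B_skew A : A^T = - A -> 1%:M - A \in unitmx.
Proof.
move=> skewA; rewrite unitmxE unitfE; apply/det0P => -[v nz_v].
rewrite mulmxBr mulmx1 => /eqP; rewrite subr_eq0 => /eqP vA.
have vAv0 : (v *m A *m v^T) 0 0 = 0.
  have : (v *m A *m v^T) 0 0 = - (v *m A *m v^T) 0 0.
    rewrite -{1}[v *m A *m v^T]trmx11 !trmx_mul trmxK skewA mulNmx mulmxN.
    by rewrite mulmxA !mxE.
  lra.
move: vAv0; rewrite -vA mxE => vv0.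
apply/negP: nz_v; rewrite negbK; apply/eqP/rowP => j; rewrite mxE.
have /psumr_eq0P vj0 : \sum_(k < n) v 0 k ^+ 2 = 0.
  by rewrite -[RHS]vv0; apply: eq_bigr => k _; rewrite mxE expr2.
by apply/eqP; rewrite -sqrf_eq0 vj0 // => k _; exact: sqr_ge0.
Qed.

Lemma unitmx_1D_skew A : A^T = - A -> 1%:M + A \in unitmx.
Proof. by move=> skewA; rewrite -[A]opprK unitmx_1B_skew // linearN /= skewA. Qed.

Lemma cayley_eq A K :
  1%:M - A \in unitmx -> K *m (1%:M - A) = 1%:M + A -> cayley A = K.
Proof. by move=> uQ KQ; rewrite /cayley -KQ mulmxK. Qed.

Lemma trmx_cayley A : A^T = - A -> (cayley A)^T = invmx (1%:M + A) *m (1%:M - A).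
Proof.
move=> skewA; rewrite /cayley trmx_mul trmx_inv.
by rewrite [(_ + A)^T]raddfD [(_ - A)^T]raddfB /= trmx1 skewA opprK.
Qed.

Lemma cayley_SO A : A^T = - A -> SO n (cayley A).
Proof.
move=> skewA; have uP := unitmx_1D_skew skewA; have uQ := unitmx_1B_skew skewA.
have PQC : (1%:M - A) *m (1%:M + A) = (1%:M + A) *m (1%:M - A).
  by rewrite mulmxDr mulmxBr !mulmx1 mulmxBl mulmxDl !mul1mx addrA subrK opprD addrA addrK.
split.
  apply: mulmx1C; rewrite trmx_cayley // /cayley mulmxA -(mulmxA (invmx _)) PQC.
  by rewrite mulmxA mulVmx // mul1mx mulmxV.
have detPQ : \det (1%:M + A) = \det (1%:M - A).
  by rewrite -det_tr linearD /= trmx1 skewA.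
rewrite det_mulmx det_inv detPQ mulfV //.
by rewrite -unitfE -unitmxE.
Qed.

Lemma orthogonal_eq_cayley M : M *m M^T = 1%:M -> M + 1%:M \in unitmx ->
  exists2 A, A^T = - A & cayley A = M.
Proof.
move=> MMT uP; have MTM := mulmx1C MMT; set P := M + 1%:M.
pose A := (M - 1%:M) *m invmx P.
have AP : A *m P = M - 1%:M by rewrite mulmxKV.
have uPT : P^T \in unitmx by rewrite unitmx_tr.
exists A.
  apply: (can_inj (mulmxK uP)); apply: (can_inj (mulKmx uPT)).
  rewrite -/P mulmxA -trmx_mul AP mulNmx AP mulmxN /P.
  rewrite [(M - _)^T]raddfB [(M + _)^T]raddfD /= trmx1.
  rewrite mulmxBl mulmxDr mulmxDl mulmxBr MTM !mul1mx !mulmx1.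
  by rewrite [M + _]addrC [_ + M^T]addrC addrKA [in RHS]addrC addrA subrK opprB.
have QP : (1%:M - A) *m P = 2%:M.
  by rewrite mulmxBl mul1mx AP /P [M + _]addrC addrKA opprK -raddfD.
have uQ : 1%:M - A \in unitmx.
  have : (2%:M : 'M[R]_n) \in unitmx.
    by rewrite unitmxE det_scalar unitfE expf_neq0 // pnatr_eq0.
  by rewrite -QP unitmx_mul => /andP[].
apply: cayley_eq => //; apply: (can_inj (mulmxK uP)).
rewrite -mulmxA QP mul_mx_scalar mulmxDl mul1mx AP /P addrACA subrr addr0.
by rewrite scaler_nat mulr2n.
Qed.

End Cayley.

Definition i0 : 'I_3 := @Ordinal 3 0 isT.
Definition i1 : 'I_3 := @Ordinal 3 1 isT.
Definition i2 : 'I_3 := @Ordinal 3 2 isT.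

Lemma ord3P (i : 'I_3) : [\/ i = i0, i = i1 | i = i2].
Proof.
case: i => [[|[|[|//]]] ?]; [constructor 1 | constructor 2 | constructor 3];
  exact: val_inj.
Qed.

Lemma sum3 (V : nmodType) (F : 'I_3 -> V) : \sum_i F i = F i0 + F i1 + F i2.
Proof.
by rewrite !big_ord_recr big_ord0 /= add0r; congr (F _ + F _ + F _); apply: val_inj.
Qed.

Section Matrix3.
Variable R : comPzRingType.
Implicit Types M : 'M[R]_3.

Definition mx3 (a b c d e f g h k : R) : 'M[R]_3 :=
  \matrix_(i, j) match nat_of_ord i, nat_of_ord j with
    | 0, 0 => a | 0, 1 => b | 0, _ => c
    | 1, 0 => d | 1, 1 => e | 1, _ => f
    | _, 0 => g | _, 1 => h | _, _ => k end.

Lemma mx3_eta M : M = mx3 (M i0 i0) (M i0 i1) (M i0 i2) (M i1 i0) (M i1 i1) (M i1 i2)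
  (M i2 i0) (M i2 i1) (M i2 i2).
Proof. by apply/matrixP => i j; rewrite mxE; case: (ord3P i) => ->; case: (ord3P j) => ->. Qed.

Lemma det_mx3 M : \det M =
  M i0 i0 * M i1 i1 * M i2 i2 + M i0 i1 * M i1 i2 * M i2 i0
  + M i0 i2 * M i1 i0 * M i2 i1 - M i0 i0 * M i1 i2 * M i2 i1
  - M i0 i1 * M i1 i0 * M i2 i2 - M i0 i2 * M i1 i1 * M i2 i0.
Proof.
rewrite {1}[M]mx3_eta (expand_det_row _ i0) sum3 /cofactor !mxE /=.
rewrite !(expand_det_row _ ord0) !big_ord_recr !big_ord0 /cofactor !det_mx11 !mxE /=.
ring.
Qed.

Lemma tr_adj_mx3 M : \tr (\adj M) =
  M i1 i1 * M i2 i2 - M i1 i2 * M i2 i1 + M i0 i0 * M i2 i2 - M i0 i2 * M i2 i0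
  + M i0 i0 * M i1 i1 - M i0 i1 * M i1 i0.
Proof.
rewrite {1}[M]mx3_eta /mxtrace sum3 !mxE /cofactor.
rewrite !(expand_det_row _ ord0) !big_ord_recr !big_ord0 /cofactor !det_mx11 !mxE /=.
ring.
Qed.

Lemma det_add1_mx3 M : \det (M + 1%:M) = \det M + \tr (\adj M) + \tr M + 1.
Proof. by rewrite !det_mx3 tr_adj_mx3 /mxtrace sum3 !mxE /=; ring. Qed.

End Matrix3.

Section SO3.
Variable R : comUnitRingType.
Implicit Types M : 'M[R]_3.

Lemma det_add1_SO3 M : SO 3 M -> \det (M + 1%:M) = 2 * (1 + \tr M).
Proof. by move=> SOM; rewrite det_add1_mx3 adj_SO // mxtrace_tr SOM.2; ring. Qed.

Definition quarter_turn (i : 'I_3) : 'M[R]_3 :=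
  match nat_of_ord i with
  | 0 => mx3 1 0 0 0 0 (-1) 0 1 0
  | 1 => mx3 0 0 1 0 1 0 (-1) 0 0
  | _ => mx3 0 (-1) 0 1 0 0 0 0 1
  end.

Lemma quarter_turn_SO i : SO 3 (quarter_turn i).
Proof.
split; last by rewrite det_mx3; case: (ord3P i) => -> /=; rewrite !mxE /=; ring.
apply/matrixP => j k; rewrite !mxE sum3 !mxE.
by case: (ord3P i) => ->; case: (ord3P j) => ->; case: (ord3P k) => -> /=; rewrite ?mxE /=; ring.
Qed.

Lemma mxtrace_quarter_turn i : \tr (quarter_turn i) = 1.
Proof. by rewrite /mxtrace sum3; case: (ord3P i) => -> /=; rewrite !mxE /=; ring. Qed.

Lemma sum_quarter_turns : \sum_i ((quarter_turn i)^T + quarter_turn i) = 2%:M.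
Proof.
apply/matrixP => j k; rewrite summxE sum3 !mxE /=.
by case: (ord3P j) => ->; case: (ord3P k) => -> /=; rewrite ?mxE /=; ring.
Qed.

End SO3.

Section SO3Factorization.
Variable R : realFieldType.
Implicit Types M : 'M[R]_3.

Lemma SO3_unitmx_add1 M : SO 3 M -> 1 + \tr M != 0 -> M + 1%:M \in unitmx.
Proof. by move=> SOM trM; rewrite unitmxE det_add1_SO3 // unitfE mulf_neq0 ?pnatr_eq0. Qed.

Lemma SO3_trace_split M :
  exists K, [/\ SO 3 K, 1 + \tr K != 0 & 1 + \tr (K^T *m M) != 0].
Proof.
(* Over the six quarter turns K, the values 1 + tr (K^T M) sum to 6 + 2 tr M,
   while K = 1 gives 1 + tr M: they cannot all vanish. *)
apply: contrapT => noK.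
have trK0 K : SO 3 K -> 1 + \tr K != 0 -> 1 + \tr (K^T *m M) = 0.
  by move=> SOK trK; apply/eqP/negPn/negP => trKM; apply: noK; exists K.
have trM : 1 + \tr M = 0.
  by have := trK0 _ (SO1 _ _); rewrite trmx1 mul1mx mxtrace1 nat1r pnatr_eq0; apply.
have trQ i : \tr ((quarter_turn R i)^T *m M) + \tr (quarter_turn R i *m M) = -2.
  have := trK0 _ (quarter_turn_SO R i); have := trK0 _ (SO_tr (quarter_turn_SO R i)).
  rewrite trmxK mxtrace_tr mxtrace_quarter_turn.
  have two_neq0 : (1 + 1 : R) != 0 by lra.
  by move=> /(_ two_neq0) ? /(_ two_neq0) ?; lra.
have : \sum_i (\tr ((quarter_turn R i)^T *m M) + \tr (quarter_turn R i *m M)) = 2 * \tr M.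
  under eq_bigr do rewrite -mxtraceD -mulmxDl.
  by rewrite -raddf_sum -mulmx_suml sum_quarter_turns mul_scalar_mx /= mxtraceZ.
rewrite sum3 !trQ; lra.
Qed.

Lemma SO3_cayley_mul M : SO 3 M ->
  exists A B : 'M[R]_3, [/\ A^T = - A, B^T = - B & M = cayley A *m cayley B].
Proof.
move=> SOM; have [K [SOK trK trKM]] := SO3_trace_split M.
have SOKM := SO_mul (SO_tr SOK) SOM.
have [B skewB KMB] := orthogonal_eq_cayley SOKM.1 (SO3_unitmx_add1 SOKM trKM).
have [A skewA KA] := orthogonal_eq_cayley SOK.1 (SO3_unitmx_add1 SOK trK).
by exists A, B; rewrite KA KMB mulmxA SOK.1 mul1mx.
Qed.

End SO3Factorization.

Section MatrixContinuity.
Variable R : realFieldType.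

Lemma continuous_mxP (T : topologicalType) m n (F : T -> 'M[R]_(m, n)) :
  continuous F <-> forall i j, continuous (fun t => F t i j).
Proof.
split=> [cF i j t|cFij t].
  exact: (continuous_comp (cF t) (@coord_continuous _ _ _ i j (F t))).
apply/cvg_mx_entourageP => A entA.
apply: filter_forall => i; apply: filter_forall => j.
apply: (filterS (P := [set s | A (F t i j, F s i j)])) => [s /= As|]; first by rewrite inE.
exact: (cvg_entourageP _ _).1 (cFij i j t) A entA.
Qed.

Lemma continuous_mulmx (T : topologicalType) m n p
    (F : T -> 'M[R]_(m, n)) (G : T -> 'M[R]_(n, p)) :
  continuous F -> continuous G -> continuous (fun t => F t *m G t).
Proof.
move=> /continuous_mxP cF /continuous_mxP cG; apply/continuous_mxP => i j.
under [fun t => _]funext do rewrite mxE.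
apply: continuous_big => [|k _]; first exact: add_continuous.
by move=> t; apply: continuousM; [exact: cF | exact: cG].
Qed.

Lemma continuous_trmx (T : topologicalType) m n (F : T -> 'M[R]_(m, n)) :
  continuous F -> continuous (fun t => (F t)^T).
Proof.
move=> /continuous_mxP cF; apply/continuous_mxP => i j.
by under [fun t => _]funext do rewrite mxE; exact: cF.
Qed.

Lemma det_continuous n : continuous (@determinant R n).
Proof.
apply: continuous_big => [|s _]; first exact: add_continuous.
move=> M; apply: (cvgM (FF := nbhs_filter M)); first exact: cvg_cst.
apply: continuous_big => [|i _]; first exact: mul_continuous.
exact: coord_continuous.
Qed.

Lemma adj_continuous n : continuous (@adjugate R n).
Proof.
apply/continuous_mxP => i j; under [fun M => _]funext do rewrite mxE.
move=> M; apply: (cvgM (FF := nbhs_filter M)); first exact: cvg_cst.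
apply: (continuous_comp (f := fun N : 'M[R]_n => row' j (col' i N)) _ (@det_continuous _ _)).
move: M; apply/continuous_mxP => k l; under [fun N => _]funext do rewrite !mxE.
exact: coord_continuous.
Qed.

Lemma continuous_invmx (T : topologicalType) n (F : T -> 'M[R]_n) :
  continuous F -> (forall t, F t \in unitmx) -> continuous (fun t => invmx (F t)).
Proof.
move=> cF uF.
have -> : (fun t => invmx (F t)) = (fun t => (\det (F t))^-1 *: \adj (F t)).
  by apply/funext => t; rewrite /invmx uF.
move=> t; apply: (@continuousZ R ('M[R]_n) T _ _ t).
  apply: continuousV; first by rewrite -unitfE -unitmxE.
  exact: (continuous_comp (cF t) (@det_continuous _ _)).
exact: (continuous_comp (cF t) (@adj_continuous _ _)).
Qed.

End MatrixContinuity.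

Section CayleyPaths.
Variable R : realFieldType.

Lemma cayley0 n : cayley (0 : 'M[R]_n) = 1%:M.
Proof. by rewrite /cayley addr0 subr0 invmx1 mulmx1. Qed.

Lemma continuous_cayley_scale n (A : 'M[R]_n) : A^T = - A ->
  continuous (fun t : R => cayley (t *: A)).
Proof.
move=> skewA; have skew_tA t : (t *: A)^T = - (t *: A) by rewrite linearZ /= skewA scalerN.
have cA : continuous (fun t : R => t *: A) by move=> t; exact: continuousZr_tmp.
apply: continuous_mulmx => [t|]; first exact: continuousD (cvg_cst _) (cA t).
apply: continuous_invmx => [t|t]; last exact: unitmx_1B_skew.
exact: continuousB (cvg_cst _) (cA t).
Qed.

Lemma SO3_path (M : 'M[R]_3) : SO 3 M -> exists gamma : R -> 'M[R]_3,
  [/\ continuous gamma, forall t, SO 3 (gamma t), gamma 0 = 1%:M & gamma 1 = M].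
Proof.
move=> /SO3_cayley_mul[A [B [skewA skewB ->]]].
exists (fun t => cayley (t *: A) *m cayley (t *: B)); split.
- exact: continuous_mulmx (continuous_cayley_scale skewA) (continuous_cayley_scale skewB).
- by move=> t; apply: SO_mul; apply: cayley_SO; rewrite linearZ /= ?skewA ?skewB scalerN.
- by rewrite !scale0r cayley0 mulmx1.
- by rewrite !scale1r.
Qed.

End CayleyPaths.

Lemma connected_finite_valued_constant (S X : topologicalType) (f : S -> X) (G : set X) :
  connected [set: S] -> accessible_space X -> finite_set G -> continuous f ->
  (forall s, G (f s)) -> forall s t, f s = f t.
Proof.
move=> connS accX finG cf Gf s t.
have closed_fin (F : set X) : finite_set F -> closed F.
  exact: accessible_finite_set_closed.1 accX F.
have fs_clopen : f @^-1` [set f s] = [set: S].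
  apply: connS; first by exists s.
  - exists (f @^-1` (~` (G `\ f s))); last first.
      rewrite setTI; apply/seteqP; split => u /=; first by move=> -> [].
      by move=> notG; apply: contrapT => nfu; apply: notG.
    apply: (continuousP f).1 cf _ _; rewrite openC; apply: closed_fin.
    by apply: sub_finite_set finG; exact: subDsetl.
  - exists (f @^-1` [set f s]); last by rewrite setTI.
    by apply: preimage_closed => [u _|]; [exact: cf | apply: closed_fin; exact: finite_set1].
by have : (f @^-1` [set f s]) t by rewrite fs_clopen.
Qed.

Section QuotientSections.
Variables (R : realType) (G : set 'M[R]_3).
Hypotheses (G1 : G 1%:M) (GSO : G `<=` @SO3 R)
  (GM : forall g h, G g -> G h -> G (g *m h)) (GV : forall g, G g -> G (invmx g)).

Lemma lcoset_subgroup g : G g -> lcoset G g = lcoset G 1%:M.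
Proof.
move=> Gg; have ug : g \in unitmx by rewrite unitmxE (GSO Gg).2 unitr1.
apply/seteqP; split=> _ [k Gk <-]; first by exists (g *m k); rewrite ?mul1mx //; exact: GM.
by exists (invmx g *m k); [exact: GM (GV Gg) Gk | rewrite mulmxA mulmxV // mul1mx].
Qed.

Variable f : set 'M[R]_3 -> 'M[R]_3.
Hypothesis f_sec : forall C, quot G C -> @SO3 R (f C) /\ lcoset G (f C) = C.

Lemma quot_lcoset M : @SO3 R M -> quot G (lcoset G M).
Proof. by exists M. Qed.

Lemma section_trmx_mul M : @SO3 R M -> G (M^T *m f (lcoset G M)).
Proof.
move=> SOM; have [_ fC] := f_sec (quot_lcoset SOM).
have : lcoset G (f (lcoset G M)) (f (lcoset G M)) by exists 1%:M; rewrite ?mulmx1.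
by rewrite fC => -[g Gg <-]; rewrite mulmxA (mulmx1C SOM.1) mul1mx.
Qed.

Lemma continuous_section_path (gamma : R -> 'M[R]_3) :
  quot_continuous G f -> continuous gamma -> (forall t, @SO3 R (gamma t)) ->
  continuous (fun t => f (lcoset G (gamma t))).
Proof.
move=> f_cont cgamma SOgamma; apply/continuousP => V oV.
have [_ [U [oU eU]]] := f_cont (V `&` @SO3 R) (ex_intro _ V (conj oV erefl)).
suff -> : (fun t => f (lcoset G (gamma t))) @^-1` V = gamma @^-1` U.
  exact: (continuousP gamma).1 cgamma _ oU.
apply/seteqP; split=> t /= => [Vt|Ut].
  have : (U `&` @SO3 R) (gamma t).
    rewrite -eU; split=> //; split; first exact: quot_lcoset.
    by split=> //; exact: (f_sec (quot_lcoset (SOgamma t))).1.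
  by case.
have : (U `&` @SO3 R) (gamma t) by [].
by rewrite -eU => -[_ [_ []]].
Qed.

End QuotientSections.

Theorem theorem9 (R : realType) (G : set 'M[R]_3) :
  finite_subgroup_SO3 G ->
  (exists g, G g /\ g <> 1%:M) ->
  ~ exists f : set 'M[R]_3 -> 'M[R]_3,
      (forall C, quot G C -> @SO3 R (f C) /\ lcoset G (f C) = C) /\
      quot_continuous G f.
Proof.
move=> [finG GSO G1 GM GV] [h [Gh h_neq1]] [f [f_sec f_cont]].
have [gamma [cgamma SOgamma gamma0 gamma1]] := SO3_path (GSO h Gh).
pose phi t := (gamma t)^T *m f (lcoset G (gamma t)).
have phiG t : G (phi t) := section_trmx_mul G1 f_sec (SOgamma t).
have cphi : continuous phi.
  apply: continuous_mulmx; first exact: continuous_trmx.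
  exact: continuous_section_path.
have connR : connected [set: R] by apply/connected_intervalP => x y _ _ z _.
have accM : accessible_space 'M[R]_3 by apply: hausdorff_accessible; exact: norm_hausdorff.
have := connected_finite_valued_constant connR accM finG cphi phiG 0 1.
rewrite /phi gamma0 gamma1 trmx1 mul1mx (lcoset_subgroup GSO GM GV Gh) => s1E.
have [[s1SO _] _] := f_sec _ (quot_lcoset G (SO1 R 3)).
have hT1 : h^T = 1%:M by rewrite -[h^T]mulmx1 -s1SO mulmxA -s1E.
by apply: h_neq1; rewrite -[h]trmxK hT1 trmx1.
Qed.
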